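(* In the setting of 1D Toom-Cook convolution described in the context, suppose every dot product in the three linear transforms (by $G$, $B^T$ and $A^T$) is computed by linear (recursive, left-to-right) summation of the rounded products, with arbitrary (not necessarily exactly representable) matrix entries. Then $$|\hat s-s|\le |A^T|\big(|G|\,|h|\odot|B^T|\,|x|\big)(n_h+2n+4)\varepsilon+O(\varepsilon^2)$$ and $$\|\hat s-s\|_1\le \|A^T\|_1\,\|G\|_F\,\|h\|_2\,\|B^T\|_F\,\|x\|_2\,(n_h+2n+4)\varepsilon+O(\varepsilon^2).$$
   Context: Let $n_h,n_o\ge1$, $n=n_o+n_h-1$, $p_1,\dots,p_n$ distinct reals, $N_i=1/\prod_{j\ne i}(p_i-p_j)$, $M_{i,j}$ the coefficient of $a^{j-1}$ in $\prod_{k\ne i}(a-p_k)$; $A^T\in\mathbb{R}^{n_o\times n}$ with $A^T_{i,j}=p_j^{i-1}$, $G\in\mathbb{R}^{n\times n_h}$ with $G_{i,j}=p_i^{j-1}N_i$, $B^T\in\mathbb{R}^{n\times n}$ with $B^T_{i,j}=M_{j,i}$. For $h\in F^{n_h}$, $x\in F^n$, $s=A^T(Gh\odot B^Tx)$ is the exact value and $\hat s$ is computed as: $u=fl(fl(G)h)$, $v=fl(fl(B^T)x)$ (row dot products), $w_i=fl(u_iv_i)$, $\hat s=fl(fl(A^T)w)$. Floating point model: unit roundoff $\varepsilon$, no overflow, $fl(y\,\mathrm{op}\,z)=(y\,\mathrm{op}\,z)(1+\delta)$, $fl(y)=y(1+\delta)$, $|\delta|\le\varepsilon$; matrix entries are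 stored rounded. $\odot$ is the Hadamard product, $|\cdot|$ entrywise absolute value, $\|\cdot\|_1$ the vector 1-norm / induced matrix 1-norm, $\|\cdot\|_F$ Frobenius norm, $\|\cdot\|_2$ Euclidean norm. *)

From HB Require Import structures.
From mathcomp Require Import all_boot all_order all_algebra.
Set Implicit Arguments. Unset Strict Implicit. Unset Printing Implicit Defensive.
Import Order.TTheory GRing.Theory Num.Theory.
Local Open Scope ring_scope.

Section TC.
Variable R : rcfType.

Definition tcN n (p : 'I_n -> R) (i : 'I_n) : R :=
  (\prod_(j < n | j != i) (p i - p j))^-1.
Definition tcLpoly n (p : 'I_n -> R) (i : 'I_n) : {poly R} :=
  \prod_(k < n | k != i) ('X - (p k)%:P).
(* A^T_{i,j} = p_j^{i}   (i.e. p_j^{i-1} with 1-based i) *)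
Definition tcAT no n (p : 'I_n -> R) : 'M[R]_(no, n) :=
  \matrix_(i < no, j < n) p j ^+ i.
Definition tcG n nh (p : 'I_n -> R) : 'M[R]_(n, nh) :=
  \matrix_(i < n, j < nh) (p i ^+ j * tcN p i).
(* B^T_{i,j} = M_{j,i} = coefficient of a^i in prod_{k<>j}(a - p_k) *)
Definition tcBT n (p : 'I_n -> R) : 'M[R]_(n, n) :=
  \matrix_(i < n, j < n) (tcLpoly p j)`_i.

Definition ext m (g : 'I_m -> R) (k : nat) : R :=
  if insub k is Some j then g j else 0.

(* Linear (recursive, left-to-right) summation of the rounded products
   t_k = f_k (1 + mu_k):  S_1 = t_0,  S_{k+1} = (S_k + t_k)(1 + sg_k). *)
Fixpoint lsum (f mu sg : nat -> R) (k : nat) : R :=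
  match k with
  | 0 => 0
  | k'.+1 =>
      match k' with
      | 0 => f 0%N * (1 + mu 0%N)
      | _ => (lsum f mu sg k' + f k' * (1 + mu k')) * (1 + sg k')
      end
  end.

(* Floating point dot product of row i of the stored matrix fl(M)
   (stored entries M_ij (1 + dM_ij)) with the vector y, computed by
   linear summation; mu_ij = relative error of the product with index j,
   sg_ij = relative error of the addition of term j (sg_i0 unused). *)
Definition fl_matvec m k (M dM mu sg : 'M[R]_(m, k)) (y : 'cV[R]_k) : 'cV[R]_m :=
  \col_(i < m) lsum (ext (fun j : 'I_k => (M i j * (1 + dM i j)) * y j 0))
                    (ext (fun j : 'I_k => mu i j)) (ext (fun j : 'I_k => sg i j)) k.

Record fp_errs (no nh n : nat) := FpErrs {
  dG : 'M[R]_(n, nh);  muG : 'M[R]_(n, nh);  sgG : 'M[R]_(n, nh);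
  dB : 'M[R]_(n, n);   muB : 'M[R]_(n, n);   sgB : 'M[R]_(n, n);
  dA : 'M[R]_(no, n);  muA : 'M[R]_(no, n);  sgA : 'M[R]_(no, n);
  dw : 'cV[R]_n }.

Definition mx_bnd m k (M : 'M[R]_(m, k)) (eps : R) := forall i j, `|M i j| <= eps.

Definition errs_bounded no nh n (e : fp_errs no nh n) (eps : R) :=
  mx_bnd (dG e) eps /\ mx_bnd (muG e) eps /\ mx_bnd (sgG e) eps /\
  mx_bnd (dB e) eps /\ mx_bnd (muB e) eps /\ mx_bnd (sgB e) eps /\
  mx_bnd (dA e) eps /\ mx_bnd (muA e) eps /\ mx_bnd (sgA e) eps /\
  mx_bnd (dw e) eps.

Definition hadamard m k (X Y : 'M[R]_(m, k)) : 'M[R]_(m, k) :=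
  \matrix_(i, j) (X i j * Y i j).

Definition conv_exact no nh n (AT : 'M[R]_(no, n)) (G : 'M[R]_(n, nh))
  (BT : 'M[R]_(n, n)) (h : 'cV[R]_nh) (x : 'cV[R]_n) : 'cV[R]_no :=
  AT *m hadamard (G *m h) (BT *m x).

Definition conv_fl no nh n (AT : 'M[R]_(no, n)) (G : 'M[R]_(n, nh))
  (BT : 'M[R]_(n, n)) (h : 'cV[R]_nh) (x : 'cV[R]_n) (e : fp_errs no nh n)
  : 'cV[R]_no :=
  let u := fl_matvec G (dG e) (muG e) (sgG e) h in
  let v := fl_matvec BT (dB e) (muB e) (sgB e) x in
  let w := \col_i (u i 0 * v i 0 * (1 + dw e i 0)) in
  fl_matvec AT (dA e) (muA e) (sgA e) w.

Definition mabs m k (M : 'M[R]_(m, k)) : 'M[R]_(m, k) := map_mx Num.norm M.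
Definition vnorm1 m (v : 'cV[R]_m) : R := \sum_i `|v i 0|.
Definition vnorm2 m (v : 'cV[R]_m) : R := Num.sqrt (\sum_i (v i 0) ^+ 2).
Definition mnormF m k (M : 'M[R]_(m, k)) : R :=
  Num.sqrt (\sum_i \sum_j (M i j) ^+ 2).
Definition mnorm1 m k (M : 'M[R]_(m, k)) : R :=
  \big[Num.max/0]_(j < k) \sum_(i < m) `|M i j|.

End TC.

From HB Require Import structures.
From mathcomp Require Import all_boot all_order all_algebra.
From mathcomp Require Import ring lra zify.
Import Order.TTheory GRing.Theory Num.Theory.
Set Implicit Arguments.
Unset Strict Implicit.
Local Open Scope ring_scope.

(* Linear summation of k rounded products multiplies the j-th product by at
   most k + 1 rounding factors 1 + d with |d| <= eps.  Expanding the three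
   transforms, s-hat is therefore the exact triple sum
   sum_(j,l,m) A_ij G_jl h_l B_jm x_m phi_ijlm in which every phi is a product
   of at most (n + 1) + (nh + 1) + (n + 1) + 1 such factors, hence
   |phi - 1| <= (1 + eps)^K - 1 <= K eps + 4^K eps^2 with K = nh + 2n + 4.
   Taking absolute values gives the componentwise bound.  For the 1-norm,
   summing over i bounds each column sum of |A^T| by ||A^T||_1, and
   Cauchy-Schwarz is used once on every row of G and B^T and once across the
   rows. *)

Section RelativeError.
Context {R : realDomainType}.
Implicit Types (e a b d : R) (K L : nat).

(* A product of K factors 1 + d with |d| <= e is 1 + theta with
   |theta| <= (1 + e)^K - 1. *)
Definition rel_err_le e K a := `|a - 1| <= (1 + e) ^+ K - 1.

Lemma rel_err_le0 e : rel_err_le e 0 1.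
Proof. by rewrite /rel_err_le expr0 subrr normr0. Qed.

Lemma rel_err_le1 e d : `|d| <= e -> rel_err_le e 1 (1 + d).
Proof. by rewrite /rel_err_le expr1 [1 + d]addrC addrK [1 + e]addrC addrK. Qed.

Lemma rel_err_leM e K L a b : 0 <= e ->
  rel_err_le e K a -> rel_err_le e L b -> rel_err_le e (K + L) (a * b).
Proof.
rewrite /rel_err_le => e0 ha hb.
have -> : a * b - 1 = (a - 1) * (b - 1) + (a - 1) + (b - 1) by ring.
have -> : (1 + e) ^+ (K + L) - 1 =
    ((1 + e) ^+ K - 1) * ((1 + e) ^+ L - 1) + ((1 + e) ^+ K - 1) + ((1 + e) ^+ L - 1).
  by rewrite exprD; ring.
do 2![apply: le_trans (ler_normD _ _) _; apply: lerD => //].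
by rewrite normrM; apply: ler_pM.
Qed.

Lemma rel_err_leW e K L a : 0 <= e -> (K <= L)%N -> rel_err_le e K a -> rel_err_le e L a.
Proof.
move=> e0 KL /le_trans; apply; rewrite lerD2r.
by apply: ler_weXn2l => //; rewrite lerDl.
Qed.

Lemma rel_err_le_prod (I : Type) (r : seq I) (d : I -> R) e : 0 <= e ->
  (forall i, `|d i| <= e) -> rel_err_le e (size r) (\prod_(i <- r) (1 + d i)).
Proof.
move=> e0 hd; elim: r => [|i r IH]; first by rewrite big_nil rel_err_le0.
by rewrite big_cons /= -add1n; apply: rel_err_leM => //; apply: rel_err_le1.
Qed.

Lemma exp1D_sub1_le e K : 0 <= e -> e <= 1 ->
  (1 + e) ^+ K - 1 <= K%:R * e + 4%:R ^+ K * e ^+ 2.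
Proof.
move=> e0 e1; elim: K => [|K IH].
  by rewrite expr0 subrr mul0r add0r expr0 mul1r sqr_ge0.
set c := 4%:R ^+ K in IH *.
have c0 : 0 <= c by apply: exprn_ge0.
have Kc : K%:R <= c by rewrite /c -natrX ler_nat ltnW // ltn_expl.
have Kc2 : K%:R * e ^+ 2 <= c * e ^+ 2 by apply: ler_wpM2r; rewrite ?sqr_ge0.
have ce3 : c * e ^+ 3 <= c * e ^+ 2.
  by apply: ler_wpM2l => //; rewrite exprS ler_piMl ?sqr_ge0.
have IH1 : (1 + e) ^+ K * (1 + e) <= (1 + K%:R * e + c * e ^+ 2) * (1 + e).
  by apply: ler_wpM2r; lra.
rewrite exprSr exprS -/c -natr1.
rewrite !exprS expr0 mulr1 in Kc2 ce3 IH1 *.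
(* the new quadratic terms are (K + c) e^2 + c e^3 <= 3 c e^2 <= 4^(K+1) e^2 *)
nra.
Qed.

End RelativeError.

Section LinearSummation.
Context {R : rcfType}.

(* Term j of a linear sum of k terms carries its product error and the errors
   of the additions j, ..., k - 1; term 0 enters the sum without an addition. *)
Definition lsum_weight (mu sg : nat -> R) (k j : nat) :=
  (1 + mu j) * \prod_(maxn j 1 <= l < k) (1 + sg l).

Lemma lsumE f mu sg k : lsum f mu sg k = \sum_(j < k) f j * lsum_weight mu sg k j.
Proof.
elim: k => [|[|k] IH]; first by rewrite big_ord0.
  by rewrite big_ord1 /lsum_weight big_geq // mulr1.
rewrite [lsum _ _ _ _]/= -/(lsum f mu sg k.+1) IH [RHS]big_ord_recr /= mulrDl mulr_suml.
congr (_ + _).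
  apply: eq_bigr => j _; rewrite /lsum_weight -!mulrA [in RHS]big_nat_recr //=.
  by have := ltn_ord j; lia.
by rewrite /lsum_weight -mulrA (maxn_idPl _) // big_nat1.
Qed.

Lemma lsum_weight_err e mu sg k j : 0 <= e -> (j < k)%N ->
  (forall l, `|mu l| <= e) -> (forall l, `|sg l| <= e) ->
  rel_err_le e k (lsum_weight mu sg k j).
Proof.
move=> e0 jk hmu hsg.
have := rel_err_leM e0 (rel_err_le1 (hmu j)) (rel_err_le_prod (index_iota (maxn j 1) k) e0 hsg).
by apply: rel_err_leW => //; rewrite size_iota; lia.
Qed.

Lemma ext_ord m (g : 'I_m -> R) (j : 'I_m) : ext g j = g j.
Proof. by rewrite /ext valK. Qed.

Lemma ext_bounded e m (g : 'I_m -> R) : 0 <= e ->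
  (forall j, `|g j| <= e) -> forall l, `|ext g l| <= e.
Proof. by move=> e0 hg l; rewrite /ext; case: insub => [j|]; rewrite ?normr0. Qed.

Definition fl_dot_weight m k (dM mu sg : 'M[R]_(m, k)) i (j : 'I_k) :=
  (1 + dM i j) * lsum_weight (ext (fun j => mu i j)) (ext (fun j => sg i j)) k j.

Lemma fl_matvecE m k (M dM mu sg : 'M[R]_(m, k)) y i :
  fl_matvec M dM mu sg y i 0 = \sum_j M i j * y j 0 * fl_dot_weight dM mu sg i j.
Proof.
by rewrite mxE lsumE; apply: eq_bigr => j _; rewrite ext_ord /fl_dot_weight; ring.
Qed.

Lemma fl_dot_weight_err e m k (dM mu sg : 'M[R]_(m, k)) i j : 0 <= e ->
  mx_bnd dM e -> mx_bnd mu e -> mx_bnd sg e ->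
  rel_err_le e k.+1 (fl_dot_weight dM mu sg i j).
Proof.
move=> e0 hd hmu hsg; rewrite -add1n; apply: rel_err_leM (rel_err_le1 (hd i j)) _ => //.
by apply: lsum_weight_err => //; apply: ext_bounded.
Qed.

End LinearSummation.

Section TripleSums.
Variables (N L M : nat).

Lemma sum_mul_sums_pert (R : comRingType) (a w : 'I_N -> R)
    (g u : 'I_N -> 'I_L -> R) (b v : 'I_N -> 'I_M -> R) :
  \sum_j a j * ((\sum_l g j l * u j l) * (\sum_m b j m * v j m)) * w j
    - \sum_j a j * ((\sum_l g j l) * (\sum_m b j m))
  = \sum_j \sum_l \sum_m a j * g j l * b j m * (w j * u j l * v j m - 1).
Proof.
rewrite -sumrB; apply: eq_bigr => j _.
rewrite !big_distrlr /= !mulr_sumr !mulr_suml -sumrB; apply: eq_bigr => l _.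
rewrite mulr_sumr mulr_suml mulr_sumr -sumrB; apply: eq_bigr => m _; ring.
Qed.

Lemma norm_sum3_pert_le (R : numDomainType) (t phi : 'I_N -> 'I_L -> 'I_M -> R) d :
  (forall j l m, `|phi j l m - 1| <= d) ->
  `|\sum_j \sum_l \sum_m t j l m * (phi j l m - 1)|
    <= (\sum_j \sum_l \sum_m `|t j l m|) * d.
Proof.
move=> hphi; rewrite mulr_suml; apply: le_trans (ler_norm_sum _ _ _) _.
apply: ler_sum => j _; rewrite mulr_suml; apply: le_trans (ler_norm_sum _ _ _) _.
apply: ler_sum => l _; rewrite mulr_suml; apply: le_trans (ler_norm_sum _ _ _) _.
by apply: ler_sum => m _; rewrite normrM ler_wpM2l.
Qed.

Lemma sum_norm_mul_sums (R : numDomainType) (a : 'I_N -> R)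
    (g : 'I_N -> 'I_L -> R) (b : 'I_N -> 'I_M -> R) :
  \sum_j `|a j| * ((\sum_l `|g j l|) * (\sum_m `|b j m|))
  = \sum_j \sum_l \sum_m `|a j * g j l * b j m|.
Proof.
apply: eq_bigr => j _; rewrite big_distrlr mulr_sumr; apply: eq_bigr => l _.
by rewrite mulr_sumr; apply: eq_bigr => m _; rewrite !normrM mulrA.
Qed.

End TripleSums.

Section ConvolutionError.
Context {R : rcfType}.
Variables (no nh n : nat) (AT : 'M[R]_(no, n)) (G : 'M[R]_(n, nh)) (BT : 'M[R]_(n, n)).
Variables (h : 'cV[R]_nh) (x : 'cV[R]_n) (e : fp_errs R no nh n).

Definition conv_pert i j l m :=
  ((1 + dw e j 0) * fl_dot_weight (dA e) (muA e) (sgA e) i j)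
  * fl_dot_weight (dG e) (muG e) (sgG e) j l * fl_dot_weight (dB e) (muB e) (sgB e) j m.

Lemma conv_fl_sub_exact i :
  conv_fl AT G BT h x e i 0 - conv_exact AT G BT h x i 0
  = \sum_j \sum_l \sum_m
      AT i j * (G j l * h l 0) * (BT j m * x m 0) * (conv_pert i j l m - 1).
Proof.
rewrite -sum_mul_sums_pert /conv_fl /conv_exact fl_matvecE mxE; congr (_ - _).
  by apply: eq_bigr => j _; rewrite mxE !fl_matvecE; ring.
by apply: eq_bigr => j _; rewrite !mxE.
Qed.

Lemma conv_pert_err eps i j l m : 0 <= eps -> errs_bounded e eps ->
  rel_err_le eps (nh + 2 * n + 4) (conv_pert i j l m).
Proof.
move=> e0 [hdG [hmuG [hsgG [hdB [hmuB [hsgB [hdA [hmuA [hsgA hdw]]]]]]]]].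
have := rel_err_leM e0 (rel_err_leM e0 (rel_err_leM e0
  (rel_err_le1 (hdw j 0)) (fl_dot_weight_err i j e0 hdA hmuA hsgA))
  (fl_dot_weight_err j l e0 hdG hmuG hsgG)) (fl_dot_weight_err j m e0 hdB hmuB hsgB).
by apply: rel_err_leW => //; lia.
Qed.

Lemma conv_exact_abs_sum3 i :
  conv_exact (mabs AT) (mabs G) (mabs BT) (mabs h) (mabs x) i 0
  = \sum_j \sum_l \sum_m `|AT i j * (G j l * h l 0) * (BT j m * x m 0)|.
Proof.
rewrite -sum_norm_mul_sums /conv_exact mxE; apply: eq_bigr => j _.
by rewrite !mxE; congr (_ * (_ * _)); apply: eq_bigr => l _; rewrite !mxE normrM.
Qed.

Lemma conv_exact_abs_ge0 i : 0 <= conv_exact (mabs AT) (mabs G) (mabs BT) (mabs h) (mabs x) i 0.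
Proof. by rewrite conv_exact_abs_sum3; do 3!apply: sumr_ge0 => ? _. Qed.

Lemma conv_fl_err_le eps i : 0 <= eps -> errs_bounded e eps ->
  `|conv_fl AT G BT h x e i 0 - conv_exact AT G BT h x i 0|
    <= conv_exact (mabs AT) (mabs G) (mabs BT) (mabs h) (mabs x) i 0
       * ((1 + eps) ^+ (nh + 2 * n + 4) - 1).
Proof.
move=> e0 be; rewrite conv_fl_sub_exact conv_exact_abs_sum3.
by apply: norm_sum3_pert_le => j l m; apply: conv_pert_err.
Qed.

End ConvolutionError.

Section Norms.
Context {R : rcfType}.

Lemma cauchy_schwarz N (a b : 'I_N -> R) :
  \sum_i a i * b i <= Num.sqrt (\sum_i a i ^+ 2) * Num.sqrt (\sum_i b i ^+ 2).
Proof.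
have sum_sqr_ge0 (c : 'I_N -> R) : 0 <= \sum_i c i ^+ 2.
  by apply: sumr_ge0 => i _; apply: sqr_ge0.
have lagrange : \sum_i \sum_j (a i * b j - a j * b i) ^+ 2 =
    (\sum_i a i ^+ 2) * (\sum_j b j ^+ 2) + (\sum_i b i ^+ 2) * (\sum_j a j ^+ 2)
    - 2%:R * ((\sum_i a i * b i) * (\sum_j a j * b j)).
  rewrite !big_distrlr mulr_sumr -big_split -sumrB /=; apply: eq_bigr => i _.
  rewrite mulr_sumr -big_split -sumrB /=; apply: eq_bigr => j _; ring.
have sqr_le : (\sum_i a i * b i) ^+ 2 <= (\sum_i a i ^+ 2) * (\sum_i b i ^+ 2).
  have : 0 <= \sum_i \sum_j (a i * b j - a j * b i) ^+ 2.
    by apply: sumr_ge0 => i _; apply: sum_sqr_ge0.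
  by rewrite lagrange expr2; lra.
apply: le_trans (ler_norm _) _.
by rewrite -sqrtr_sqr -sqrtrM ?ler_sqrt ?mulr_ge0.
Qed.

Lemma mabs_mulmx_le m k (M : 'M[R]_(m, k)) (y : 'cV[R]_k) i :
  (mabs M *m mabs y) i 0 <= Num.sqrt (\sum_j M i j ^+ 2) * vnorm2 y.
Proof.
rewrite mxE; under eq_bigr do rewrite !mxE.
apply: le_trans (cauchy_schwarz (fun j => `|M i j|) (fun j => `|y j 0|)) _.
have sqr_abs (r : R) : `|r| ^+ 2 = r ^+ 2 by apply/real_normK/num_real.
rewrite /vnorm2; under eq_bigr do rewrite sqr_abs.
by under [X in _ * Num.sqrt X]eq_bigr do rewrite sqr_abs.
Qed.

Lemma mnorm1_ge0 m k (M : 'M[R]_(m, k)) : 0 <= mnorm1 M.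
Proof.
apply: (big_ind (fun y => 0 <= y)) => // [y z hy hz|j _]; first by rewrite le_max hy.
exact: sumr_ge0.
Qed.

Lemma sum_norm_col_le_mnorm1 m k (M : 'M[R]_(m, k)) j : \sum_i `|M i j| <= mnorm1 M.
Proof. exact: (le_bigmax _ (fun j => \sum_i `|M i j|)). Qed.

Lemma mabs_mulmx_ge0 m k (M : 'M[R]_(m, k)) (y : 'cV[R]_k) i : 0 <= (mabs M *m mabs y) i 0.
Proof. by rewrite mxE sumr_ge0 // => j _; rewrite !mxE mulr_ge0. Qed.

Lemma sum_conv_exact_abs_le no nh n (AT : 'M[R]_(no, n)) (G : 'M[R]_(n, nh))
    (BT : 'M[R]_(n, n)) (h : 'cV[R]_nh) (x : 'cV[R]_n) :
  \sum_i conv_exact (mabs AT) (mabs G) (mabs BT) (mabs h) (mabs x) i 0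
    <= mnorm1 AT * mnormF G * vnorm2 h * mnormF BT * vnorm2 x.
Proof.
pose rowF m k (M : 'M[R]_(m, k)) j := Num.sqrt (\sum_l M j l ^+ 2).
have sum_rowF_le : \sum_j rowF _ _ G j * rowF _ _ BT j <= mnormF G * mnormF BT.
  have sqr_rowF m k (M : 'M[R]_(m, k)) j : rowF _ _ M j ^+ 2 = \sum_l M j l ^+ 2.
    by rewrite sqr_sqrtr // sumr_ge0 // => l _; apply: sqr_ge0.
  apply: le_trans (cauchy_schwarz _ _) _.
  by under eq_bigr do rewrite sqr_rowF; under [X in _ * Num.sqrt X]eq_bigr do rewrite sqr_rowF.
have term_le j :
    \sum_i mabs AT i j * hadamard (mabs G *m mabs h) (mabs BT *m mabs x) j 0
    <= mnorm1 AT * (vnorm2 h * vnorm2 x) * (rowF _ _ G j * rowF _ _ BT j).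
  rewrite -mulr_suml mxE; under eq_bigr do rewrite mxE.
  have -> : mnorm1 AT * (vnorm2 h * vnorm2 x) * (rowF _ _ G j * rowF _ _ BT j)
      = mnorm1 AT * ((rowF _ _ G j * vnorm2 h) * (rowF _ _ BT j * vnorm2 x)) by ring.
  apply: ler_pM; rewrite ?sumr_ge0 ?mulr_ge0 ?mabs_mulmx_ge0 ?sum_norm_col_le_mnorm1 //.
  by apply: ler_pM; rewrite ?mabs_mulmx_ge0 ?mabs_mulmx_le.
have -> : mnorm1 AT * mnormF G * vnorm2 h * mnormF BT * vnorm2 x
    = mnorm1 AT * (vnorm2 h * vnorm2 x) * (mnormF G * mnormF BT) by ring.
rewrite /conv_exact; under eq_bigr do rewrite mxE.
rewrite exchange_big /=; apply: le_trans (ler_sum _ (fun j _ => term_le j)) _.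
by rewrite -mulr_sumr ler_wpM2l ?mulr_ge0 ?mnorm1_ge0 ?sqrtr_ge0.
Qed.

End Norms.

Theorem mainTheorem2 (R : rcfType) (no nh : nat) (Hno : (0 < no)%N) (Hnh : (0 < nh)%N)
  (p : 'I_(no + nh - 1) -> R) (Hp : injective p)
  (h : 'cV[R]_nh) (x : 'cV[R]_(no + nh - 1)) :
  let n := (no + nh - 1)%N in
  let AT := tcAT no p in
  let G := tcG nh p in
  let BT := tcBT p in
  let s := conv_exact AT G BT h x in
  exists C : R, exists eps0 : R, 0 < eps0 /\
    forall eps : R, 0 <= eps -> eps <= eps0 ->
    forall e : fp_errs R no nh n, errs_bounded e eps ->
    let shat := conv_fl AT G BT h x e in
    (forall i : 'I_no,
       `|shat i 0 - s i 0|
         <= (mabs AT *m hadamard (mabs G *m mabs h) (mabs BT *m mabs x)) i 0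
              * (nh + 2 * n + 4)%:R * eps + C * eps ^+ 2)
    /\ vnorm1 (shat - s)
         <= mnorm1 AT * mnormF G * vnorm2 h * mnormF BT * vnorm2 x
              * (nh + 2 * n + 4)%:R * eps + C * eps ^+ 2.
Proof.
move=> n AT G BT s; set K := (nh + 2 * n + 4)%N.
pose T i := conv_exact (mabs AT) (mabs G) (mabs BT) (mabs h) (mabs x) i 0.
pose S := \sum_i T i.
exists (4%:R ^+ K * S), 1; split=> [|eps e0 e1 e be shat]; first exact: ltr01.
have T_ge0 i : 0 <= T i := conv_exact_abs_ge0 AT G BT h x i.
have err_le i : `|shat i 0 - s i 0| <= T i * (K%:R * eps + 4%:R ^+ K * eps ^+ 2).
  exact: le_trans (conv_fl_err_le AT G BT h x i e0 be)
                  (ler_wpM2l (T_ge0 i) (exp1D_sub1_le K e0 e1)).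
have quad_ge0 : 0 <= 4%:R ^+ K * eps ^+ 2 by rewrite mulr_ge0 ?exprn_ge0.
have lin_ge0 : 0 <= K%:R * eps by rewrite mulr_ge0.
split=> [i|].
  have T_le_S : T i <= S by rewrite /S (bigD1 i) //= lerDl sumr_ge0.
  apply: le_trans (err_le i) _; have := ler_wpM2l quad_ge0 T_le_S; rewrite -/(T i); lra.
have S_le : S <= _ := sum_conv_exact_abs_le AT G BT h x.
apply: le_trans (_ : S * (K%:R * eps + 4%:R ^+ K * eps ^+ 2) <= _); last first.
  by have := ler_wpM2r lin_ge0 S_le; lra.
rewrite /vnorm1 /S mulr_suml; apply: ler_sum => i _.
by rewrite [(shat - s) i 0]mxE [(- s) i 0]mxE err_le.
Qed.
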